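(* For each of the three pairs of families (Demazure atoms, monomial slide polynomials), (Demazure atoms, fundamental slide polynomials), (fundamental particles, monomial slide polynomials), neither family expands positively in the other; that is, in each pair, some element of the first family is not a nonnegative linear combination of elements of the second, and some element of the second is not a nonnegative linear combination of elements of the first.
   Context: Weak composition of length $n$: sequence of $n$ nonnegative integers; $\mathrm{flat}(a)$ deletes zero parts; $b\ge a$ means $b_1+\cdots+b_i\ge a_1+\cdots+a_i$ for all $i$. $\mathfrak{M}_a=\sum x^b$ over $b\ge a$ (length $n$) with $\mathrm{flat}(b)=\mathrm{flat}(a)$; $\mathfrak{F}_a=\sum x^b$ over $b\ge a$ with $\mathrm{flat}(b)$ refining $\mathrm{flat}(a)$. Fundamental particle: a local move replaces consecutive entries $(0,k)$ at positions $p,p+1$ by $(i,j)$, $i+j=k$, $i,j\ge0$; fixed slides of $a$ are obtained by sequences of such moves with $j>0$ required whenever $a_{p+1}\neq0$; $\mathfrak{L}_a=\sum x^b$ over the set of fixed slides $b$. Demazure atom: in $D(a)$ ($a_i$ left-justified boxes in row $i$, row 1 lowest), triples (rows $r<s$) are Type A: $\gamma=(r,c),\alpha=(r,c+1),\beta=(s,c+1)$ with $a_r\ge a_s$, or Type B: $\gamma=(s,c),\alpha=(s,c+1),\beta=(r,c)$ with $a_s>a_r$; inversion triple: $\beta>\gamma\ge\alpha$ or $\gamma\ge\alpha>\beta$; $\mathcal{A}_a=\sum_S\prod_i x_i^{\#\{\text{entries } i\}}$ over fillings $S$ of $D(a)$ with positive integers, rows weakly decreasing left to right, distinct column entries, all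 triples inversion triples, and first-column entry of each nonempty row $i$ equal to $i$. Each family (for fixed length $n$) is a basis of $\mathbb{Z}[x_1,\ldots,x_n]$. *)

From HB Require Import structures.
From mathcomp Require Import all_boot all_order all_algebra.
From mathcomp Require Import mpoly.
Set Implicit Arguments. Unset Strict Implicit. Unset Printing Implicit Defensive.
Import Order.TTheory GRing.Theory Num.Theory.

(* A weak composition of length n is a multinomial a : 'X_{1..n};
   position i (1-indexed in the paper) is the ordinal i-1 : 'I_n.
   Polynomials live in {mpoly int[n]} = Z[x_1,...,x_n], x_i = 'X_(i-1). *)

Definition dominates n (b a : 'X_{1..n}) : bool :=
  [forall i : 'I_n, (\sum_(j < n | j <= i) a j <= \sum_(j < n | j <= i) b j)%N].

Definition flat n (a : 'X_{1..n}) : seq nat :=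
  [seq x <- [seq a i | i <- enum 'I_n] | x != 0%N].

(* refinesb c d : the composition c refines d, i.e. d is obtained from c by
   summing consecutive nonempty blocks of c *)
Fixpoint refinesb (c d : seq nat) : bool :=
  match d with
  | [::] => c == [::]
  | x :: d' => has (fun k => (sumn (take k c) == x) && refinesb (drop k c) d')
                   (iota 1 (size c))
  end.

Definition mslide n (a : 'X_{1..n}) : {mpoly int[n]} :=
  \sum_(b : 'X_{1..n < (mdeg a).+1} | dominates b a && (flat b == flat a))
    'X_[bmnm b].

Definition fslide n (a : 'X_{1..n}) : {mpoly int[n]} :=
  \sum_(b : 'X_{1..n < (mdeg a).+1} | dominates b a && refinesb (flat b) (flat a))
    'X_[bmnm b].

(* one local move of the fundamental particle of a:  consecutive entries
   (0,k) at positions p, p+1 of b are replaced by (i,j) in c, i + j = k,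
   with j > 0 required whenever a_{p+1} <> 0.  Moves preserve the degree,
   so all fixed slides of a live in 'X_{1..n < (mdeg a).+1}. *)
Definition pmove n (a : 'X_{1..n}) (b c : 'X_{1..n < (mdeg a).+1}) : bool :=
  [exists p : 'I_n, exists q : 'I_n,
     [&& val q == p.+1, bmnm b p == 0%N, (bmnm c p + bmnm c q == bmnm b q)%N,
         [forall t : 'I_n, [|| t == p, t == q | bmnm c t == bmnm b t]] &
         (a q != 0%N) ==> (0 < bmnm c q)%N]].

Definition self_bm n (a : 'X_{1..n}) : 'X_{1..n < (mdeg a).+1} :=
  BMultinom (ltnSn (mdeg a)).

Definition particle n (a : 'X_{1..n}) : {mpoly int[n]} :=
  \sum_(b : 'X_{1..n < (mdeg a).+1} | connect (@pmove n a) (self_bm a) b)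
    'X_[bmnm b].

(* Cells of D(a): (r, c) with r : 'I_n (row r+1, row 1
   lowest) and column c < a r (columns 0-indexed, c < mdeg a).  A filling is
   encoded as S : {ffun 'I_n * 'I_(mdeg a) -> 'I_n.+1} whose value is 0
   outside D(a) (canonical encoding) and the (positive) entry inside.
   Entries of valid fillings are automatically <= n (rows weakly decrease
   from the first-column entry r+1 <= n), so this range loses nothing. *)
Definition atom_filling := fun n d => {ffun 'I_n * 'I_d -> 'I_n.+1}.

Definition inv_triple (g al be : nat) : bool :=
  ((g < be) && (al <= g)) || ((al <= g) && (be < al)).

Definition valid_filling n (a : 'X_{1..n}) (S : atom_filling n (mdeg a)) : bool :=
  let v r c := (S (r, c) : nat) in
  [&&
      [forall r : 'I_n, forall c : 'I_(mdeg a), (c < a r)%N || (v r c == 0%N)],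
      [forall r : 'I_n, forall c : 'I_(mdeg a), (c < a r)%N ==> (0 < v r c)%N],
      [forall r : 'I_n, forall c : 'I_(mdeg a), ((val c == 0%N) && (c < a r)%N) ==> (v r c == r.+1)],
      [forall r : 'I_n, forall c : 'I_(mdeg a), forall c' : 'I_(mdeg a),
         ((val c' == c.+1) && (c' < a r)%N) ==> (v r c' <= v r c)%N],
      [forall r : 'I_n, forall s : 'I_n, forall c : 'I_(mdeg a),
         [&& r != s, (c < a r)%N & (c < a s)%N] ==> (v r c != v s c)],
      (* type A triples are inversion triples *)
      [forall r : 'I_n, forall s : 'I_n, forall c : 'I_(mdeg a), forall c' : 'I_(mdeg a),
         [&& (r < s)%N, (a s <= a r)%N, val c' == c.+1, (c' < a r)%N & (c' < a s)%N]
           ==> inv_triple (v r c) (v r c') (v s c')] &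
      (* type B triples are inversion triples *)
      [forall r : 'I_n, forall s : 'I_n, forall c : 'I_(mdeg a), forall c' : 'I_(mdeg a),
         [&& (r < s)%N, (a r < a s)%N, val c' == c.+1, (c' < a s)%N & (c < a r)%N]
           ==> inv_triple (v s c) (v s c') (v r c)]].

Definition filling_weight n (a : 'X_{1..n}) (S : atom_filling n (mdeg a))
  : 'X_{1..n} :=
  [multinom #|[pred rc : 'I_n * 'I_(mdeg a) |
                (rc.2 < a rc.1)%N && ((S rc : nat) == i.+1)]| | i < n].

Definition atom n (a : 'X_{1..n}) : {mpoly int[n]} :=
  \sum_(S : atom_filling n (mdeg a) | valid_filling S) 'X_[filling_weight S].

Definition pos_comb n (B : 'X_{1..n} -> {mpoly int[n]}) (f : {mpoly int[n]}) :=
  exists (s : seq 'X_{1..n}) (c : 'X_{1..n} -> nat),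
    f = (\sum_(b <- s) (c b)%:R * B b)%R.

Definition not_pos_in (A B : forall n, 'X_{1..n} -> {mpoly int[n]}) :=
  exists n (a : 'X_{1..n}), ~ pos_comb (B n) (A n a).

From HB Require Import structures.
From mathcomp Require Import all_boot all_order all_algebra.
From mathcomp Require Import mpoly.
From mathcomp Require Import zify.
Set Implicit Arguments. Unset Strict Implicit. Unset Printing Implicit Defensive.
Import Order.TTheory GRing.Theory Num.Theory.

(* All six families have nonnegative coefficients, so if every member of a
   family B containing the monomial x^m also contains x^m', then no nonnegative
   combination of members of B contains x^m without x^m'.  Two variables suffice:
   - A_02 = L_02 = x2^2 + x1 x2 contain x2^2 but not x1^2, while every M_b or
     F_b containing x2^2 also contains x1^2, since (2,0) dominates (0,2) and
     has the same flattening;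
   - M_02 = x2^2 + x1^2 lacks x1 x2, while an atom or particle containing x2^2
     must be A_02 or L_02 (fixed slides of b dominate b, and the bottom row of
     a filling of D(b) holds b_1 ones), and these contain x1 x2;
   - F_13 = x1 x2^3 lacks x1^2 x2^2, while the atoms containing x1 x2^3 are
     A_04 and A_13, which both contain x1^2 x2^2. *)

Section SumOfMonomials.

Variables (n : nat) (T : finType) (P : pred T) (g : T -> 'X_{1..n}).

Lemma mcoeff_sum_mpolyX m :
  mcoeff m (\sum_(i | P i) 'X_[g i] : {mpoly int[n]}) =
  (#|[pred i | P i && (g i == m)]|%:R)%R.
Proof.
rewrite raddf_sum -sum1_card natr_sum big_mkcondr /=.
by apply: eq_bigr => i _; rewrite mcoeffX; case: (g i == m).
Qed.

Lemma mcoeff_sum_mpolyX_ge0 m :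
  (0 <= mcoeff m (\sum_(i | P i) 'X_[g i] : {mpoly int[n]}))%R.
Proof. by rewrite mcoeff_sum_mpolyX ler0n. Qed.

Lemma mcoeff_sum_mpolyX_neq0 m :
  (mcoeff m (\sum_(i | P i) 'X_[g i] : {mpoly int[n]}) != 0)%R <->
  exists i, P i && (g i == m).
Proof.
rewrite mcoeff_sum_mpolyX pnatr_eq0 -lt0n.
by split=> [/card_gt0P [i]|[i Pi]]; [exists i | apply/card_gt0P; exists i].
Qed.

End SumOfMonomials.

Lemma mcoeff_sum_bmnm_neq0 n d (P : pred 'X_{1..n}) m :
  (mcoeff m (\sum_(b : 'X_{1..n < d} | P b) 'X_[bmnm b] : {mpoly int[n]}) != 0)%R
  <-> (mdeg m < d) && P m.
Proof.
rewrite mcoeff_sum_mpolyX_neq0; split=> [[b /andP [Pb /eqP <-]] | /andP [lt_m_d Pm]].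
  by rewrite Pb bmdeg.
by exists (BMultinom lt_m_d); rewrite /= Pm eqxx.
Qed.

Lemma not_pos_comb_support n (B : 'X_{1..n} -> {mpoly int[n]}) f m m' :
  (forall b k, 0 <= mcoeff k (B b))%R ->
  (forall b, mcoeff m (B b) != 0 -> mcoeff m' (B b) != 0)%R ->
  (mcoeff m f != 0)%R -> mcoeff m' f = 0%R -> ~ pos_comb B f.
Proof.
move=> B_ge0 B_mm' fm fm' [s [c Ef]]; move: fm fm'; rewrite {}Ef !raddf_sum /=.
have term_ge0 k b : (0 <= mcoeff k ((c b)%:R * B b))%R.
  by rewrite mulr_natl mcoeffMn mulrn_wge0.
move=> fm /eqP; rewrite psumr_eq0 // => /allP m'_vanish; move: fm.
rewrite big_seq big1 ?eqxx // => b /m'_vanish /=.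
rewrite !mulr_natl !mcoeffMn mulrn_eq0 => /orP [/eqP -> | Bm']; first by rewrite mulr0n.
have /eqP -> : (mcoeff m (B b) == 0)%R by apply: contraTT Bm' => /B_mm'.
by rewrite mul0rn.
Qed.

Lemma mcoeff_mslide_neq0 n (a m : 'X_{1..n}) :
  (mcoeff m (mslide a) != 0)%R <->
  [&& mdeg m <= mdeg a, dominates m a & flat m == flat a].
Proof.
exact: (mcoeff_sum_bmnm_neq0 _ (fun b => dominates b a && (flat b == flat a))).
Qed.

Lemma mcoeff_fslide_neq0 n (a m : 'X_{1..n}) :
  (mcoeff m (fslide a) != 0)%R <->
  [&& mdeg m <= mdeg a, dominates m a & refinesb (flat m) (flat a)].
Proof.
exact: (mcoeff_sum_bmnm_neq0 _ (fun b => dominates b a && refinesb (flat b) (flat a))).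
Qed.

Lemma mcoeff_particle_neq0 n (a m : 'X_{1..n}) :
  (mcoeff m (particle a) != 0)%R <->
  exists b, connect (@pmove n a) (self_bm a) b && (bmnm b == m).
Proof. exact: mcoeff_sum_mpolyX_neq0. Qed.

Lemma mcoeff_atom_neq0 n (a m : 'X_{1..n}) :
  (mcoeff m (atom a) != 0)%R <->
  exists S : atom_filling n (mdeg a), valid_filling S && (filling_weight S == m).
Proof. exact: mcoeff_sum_mpolyX_neq0. Qed.

Lemma mslide_ge0 n (a m : 'X_{1..n}) : (0 <= mcoeff m (mslide a))%R.
Proof. exact: mcoeff_sum_mpolyX_ge0. Qed.

Lemma fslide_ge0 n (a m : 'X_{1..n}) : (0 <= mcoeff m (fslide a))%R.
Proof. exact: mcoeff_sum_mpolyX_ge0. Qed.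

Lemma particle_ge0 n (a m : 'X_{1..n}) : (0 <= mcoeff m (particle a))%R.
Proof. exact: mcoeff_sum_mpolyX_ge0. Qed.

Lemma atom_ge0 n (a m : 'X_{1..n}) : (0 <= mcoeff m (atom a))%R.
Proof. exact: mcoeff_sum_mpolyX_ge0. Qed.

Lemma dominates_refl n : reflexive (@dominates n).
Proof. by move=> a; apply/forallP. Qed.

Lemma dominates_trans n : transitive (@dominates n).
Proof.
move=> y x z /forallP xy /forallP yz; apply/forallP => i.
exact: leq_trans (yz i) (xy i).
Qed.

Lemma mcoeff_mslide_dominates n (m m' : 'X_{1..n}) :
  mdeg m' = mdeg m -> dominates m' m -> flat m' = flat m ->
  forall b, (mcoeff m (mslide b) != 0 -> mcoeff m' (mslide b) != 0)%R.
Proof.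
move=> deg dom fl b; rewrite !mcoeff_mslide_neq0 deg fl.
by case/and3P=> -> /(dominates_trans dom) -> ->.
Qed.

Lemma mcoeff_fslide_dominates n (m m' : 'X_{1..n}) :
  mdeg m' = mdeg m -> dominates m' m -> flat m' = flat m ->
  forall b, (mcoeff m (fslide b) != 0 -> mcoeff m' (fslide b) != 0)%R.
Proof.
move=> deg dom fl b; rewrite !mcoeff_fslide_neq0 deg fl.
by case/and3P=> -> /(dominates_trans dom) -> ->.
Qed.

Lemma connect_preserved (T : finType) (e : rel T) (P : T -> Prop) x y :
  (forall u v, e u v -> P u -> P v) -> connect e x y -> P x -> P y.
Proof.
move=> eP /connectP [p]; elim: p x => [|z p IH] x /=; first by move=> _ ->.
by case/andP=> exz pz ey Px; apply: IH pz ey (eP _ _ exz Px).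
Qed.

Section FixedSlides.

Variables (n : nat) (a : 'X_{1..n}).
Implicit Types u v b : 'X_{1..n < (mdeg a).+1}.

Lemma pmove_gt0 u v : @pmove n a u v ->
  (forall i, a i != 0 -> 0 < bmnm u i) -> forall i, a i != 0 -> 0 < bmnm v i.
Proof.
case/existsP=> p /existsP [q /and5P [_ /eqP up0 _ /forallP frame nz_q]] u_pos i nz_i.
case/or3P: (frame i) => [/eqP ip | /eqP iq | /eqP ->]; last exact: u_pos.
- by move: (u_pos i nz_i); rewrite ip up0.
- by rewrite iq; apply: (implyP nz_q); rewrite -iq.
Qed.

Lemma fixed_slide_gt0 b :
  connect (@pmove n a) (self_bm a) b -> forall i, a i != 0 -> 0 < bmnm b i.
Proof.
move=> ab; apply: (connect_preserved (P := fun c : 'X_{1..n < (mdeg a).+1} =>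
  forall i, a i != 0 -> 0 < bmnm c i) _ ab) => [|i]; first exact: pmove_gt0.
by rewrite lt0n.
Qed.

(* A move only shifts mass from position p + 1 to position p. *)
Lemma pmove_dominates u v : @pmove n a u v -> dominates v u /\ mdeg v = mdeg u.
Proof.
case/existsP=> p /existsP [q /and5P [/eqP qE /eqP up0 /eqP vpq /forallP frame _]].
have pq : p < q by move: qE => /= ->.
have split_pq (w : 'X_{1..n}) (Q : pred 'I_n) : \sum_(j | Q j) w j =
    Q p * w p + Q q * w q + \sum_(j | (j != p) && (j != q)) Q j * w j.
  have -> : \sum_(j | Q j) w j = \sum_j Q j * w j.
    by rewrite big_mkcond; apply: eq_bigr => j _; case: (Q j); rewrite ?mul1n.
  by rewrite (bigD1 p) //= (bigD1 q) 1?eq_sym ?neq_ltn ?pq //= addnA.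
have frame_sum (Q : pred 'I_n) : \sum_(j | (j != p) && (j != q)) Q j * u j =
    \sum_(j | (j != p) && (j != q)) Q j * v j.
  apply: eq_bigr => j /andP [jp jq].
  by move: (frame j); rewrite (negbTE jp) (negbTE jq) => /eqP ->.
split.
- apply/forallP => i; rewrite !split_pq frame_sum leq_add2r up0 -vpq.
  have [qi | _] := boolP (q <= i); last by rewrite !muln0.
  by rewrite (ltnW (leq_trans pq qi)) !mul1n.
- rewrite (mdegE u) (mdegE v) (split_pq u (fun=> true)) (split_pq v (fun=> true)).
  by rewrite frame_sum up0 -vpq !mul1n add0n.
Qed.

Lemma fixed_slide_dominates b :
  connect (@pmove n a) (self_bm a) b -> dominates b a /\ mdeg b = mdeg a.
Proof.
move=> ab; apply: (connect_preserved (P := fun c : 'X_{1..n < (mdeg a).+1} =>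
  dominates c a /\ mdeg c = mdeg a) _ ab).
  move=> u v /pmove_dominates [vu deg_vu] [ua deg_ua].
  by split; [apply: dominates_trans vu ua | rewrite deg_vu].
by split; [apply: dominates_refl|].
Qed.

End FixedSlides.

Lemma mnm_le_mdeg n (m : 'X_{1..n}) i : m i <= mdeg m.
Proof. by rewrite mdegE (bigD1 i) //= leq_addr. Qed.

Lemma sum_ord_eqS x k : \sum_(i < k) (x == i.+1) = (0 < x) && (x <= k).
Proof.
elim: k => [|k IH]; first by rewrite big_ord0; case: x.
rewrite big_ord_recr /= IH [x <= k.+1]leq_eqVlt ltnS.
by case: eqP => [->|_]; rewrite ?ltnn ?andbF ?addn0.
Qed.

Lemma sum_ord_ltn d k : \sum_(c < d) (c < k) = minn d k.
Proof.
elim: d => [|d IH]; first by rewrite big_ord0 min0n.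
by rewrite big_ord_recr /= IH; case: (ltnP d k) => ?; lia.
Qed.

Section AtomFillings.

Variables (n : nat) (a : 'X_{1..n}) (S : atom_filling n (mdeg a)).
Hypothesis S_valid : valid_filling S.

Lemma filling_weightE i : filling_weight S i =
  \sum_(r < n) \sum_(c < mdeg a) ((c < a r) && (S (r, c) == i.+1 :> nat)).
Proof.
rewrite mnmE pair_bigA -sum1_card big_mkcond /=.
by apply: eq_bigr => -[r c] _; rewrite inE; case: ifP.
Qed.

Lemma filling_weight_gt0 r : 0 < a r -> 0 < filling_weight S r.
Proof.
case/and5P: S_valid => _ _ first _ _ ar.
have d0 : 0 < mdeg a by apply: leq_trans ar (mnm_le_mdeg _ _).
rewrite mnmE; apply/card_gt0P; exists (r, Ordinal d0); rewrite inE /= ar /=.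
by move/forallP: first => /(_ r) /forallP /(_ (Ordinal d0)); rewrite /= ar.
Qed.

(* The first entry of the bottom row is 1 and the row weakly decreases. *)
Lemma filling_bottom_row (i0 : 'I_n) (c : 'I_(mdeg a)) :
  val i0 = 0 -> c < a i0 -> S (i0, c) = 1 :> nat.
Proof.
case/and5P: S_valid => _ /forallP pos /forallP first /forallP decr _ i00.
case: c => c; elim: c => [|c IH] lt_c lt_ca.
  by move/forallP: (first i0) => /(_ (Ordinal lt_c)); rewrite /= lt_ca i00 => /eqP.
have le1 := IH (ltnW lt_c) (ltnW lt_ca).
move/forallP: (decr i0) => /(_ (Ordinal (ltnW lt_c))) /forallP /(_ (Ordinal lt_c)).
move/forallP: (pos i0) => /(_ (Ordinal lt_c)) /=; rewrite lt_ca eqxx le1 /=.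
by case: (S _) => [[|[|]]].
Qed.

Lemma filling_weight_bottom (i0 : 'I_n) : val i0 = 0 -> a i0 <= filling_weight S i0.
Proof.
move=> i00; rewrite filling_weightE (bigD1 i0) //= (leq_trans _ (leq_addr _ _)) //.
rewrite -[leqLHS](minn_idPr (mnm_le_mdeg a i0)) -sum_ord_ltn leq_eqVlt; apply/orP; left.
apply/eqP/eq_bigr => c _; case: ltnP => //= lt_ca.
by rewrite filling_bottom_row ?i00.
Qed.

Lemma mdeg_filling_weight : mdeg (filling_weight S) = mdeg a.
Proof.
case/and5P: S_valid => _ /forallP pos _ _ _.
rewrite mdegE (eq_bigr _ (fun i _ => filling_weightE i)) exchange_big [RHS]mdegE.
apply: eq_bigr => r _; rewrite exchange_big -[RHS](minn_idPr (mnm_le_mdeg a r)).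
rewrite -sum_ord_ltn; apply: eq_bigr => c _; case: ltnP => lt_ca /=; last by rewrite big1.
have S_le : S (r, c) <= n by rewrite -ltnS ltn_ord.
move/forallP: (pos r) => /(_ c); rewrite lt_ca /= => S_pos.
by rewrite sum_ord_eqS S_pos S_le.
Qed.

End AtomFillings.

Lemma atom_support_bounds n (b m : 'X_{1..n.+1}) :
  (mcoeff m (atom b) != 0)%R -> b ord0 <= m ord0 /\ mdeg m = mdeg b.
Proof.
case/mcoeff_atom_neq0 => S /andP [S_valid /eqP <-].
by split; [apply: filling_weight_bottom | apply: mdeg_filling_weight].
Qed.

Definition mnm2 (x y : nat) : 'X_{1..2} := [multinom [tuple x; y]].

Lemma ord2P (i : 'I_2) : i = ord0 \/ i = ord_max.
Proof. by case: i => -[|[|//]] lt_i; [left | right]; apply: val_inj. Qed.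

Lemma big_ord2 (F : 'I_2 -> nat) : \sum_(i < 2) F i = F ord0 + F ord_max.
Proof. by rewrite !big_ord_recl big_ord0 addn0; congr (_ + F _); apply: val_inj. Qed.

Lemma mdeg2 (m : 'X_{1..2}) : mdeg m = m ord0 + m ord_max.
Proof. by rewrite mdegE big_ord2. Qed.

Lemma mdeg_mnm2 x y : mdeg (mnm2 x y) = x + y.
Proof. by rewrite mdeg2. Qed.

Lemma mnm2_eta (m : 'X_{1..2}) : m = mnm2 (m ord0) (m ord_max).
Proof. by apply/mnmP => i; case: (ord2P i) => ->. Qed.

Lemma dominates2 (b a : 'X_{1..2}) :
  dominates b a = (a ord0 <= b ord0) && (mdeg a <= mdeg b).
Proof.
rewrite !mdeg2; apply/forallP/andP => [dom | [le0 le_deg] i].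
  by split; [move: (dom ord0) | move: (dom ord_max)];
    rewrite big_mkcond [X in _ <= X]big_mkcond !big_ord2 /= ?addn0.
rewrite big_mkcond [X in _ <= X]big_mkcond !big_ord2.
by case: (ord2P i) => -> /=; rewrite ?addn0.
Qed.

Lemma flat_mnm2 x y : flat (mnm2 x y) = [seq k <- [:: x; y] | k != 0].
Proof.
rewrite /flat (_ : enum 'I_2 = [:: ord0; ord_max]) //.
by apply: (inj_map val_inj); rewrite val_enum_ord.
Qed.

Lemma mslide_support_02_20 b :
  (mcoeff (mnm2 0 2) (mslide b) != 0 -> mcoeff (mnm2 2 0) (mslide b) != 0)%R.
Proof. by apply: mcoeff_mslide_dominates; rewrite ?dominates2 ?mdeg_mnm2 ?flat_mnm2. Qed.

Lemma fslide_support_02_20 b :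
  (mcoeff (mnm2 0 2) (fslide b) != 0 -> mcoeff (mnm2 2 0) (fslide b) != 0)%R.
Proof. by apply: mcoeff_fslide_dominates; rewrite ?dominates2 ?mdeg_mnm2 ?flat_mnm2. Qed.

Lemma mcoeff02_mslide02 : (mcoeff (mnm2 0 2) (mslide (mnm2 0 2)) != 0)%R.
Proof. by apply/mcoeff_mslide_neq0; rewrite leqnn dominates_refl eqxx. Qed.

Lemma mcoeff11_mslide02 : mcoeff (mnm2 1 1) (mslide (mnm2 0 2)) = 0%R.
Proof.
by apply/eqP; apply: contraT => /mcoeff_mslide_neq0 /and3P [_ _]; rewrite !flat_mnm2.
Qed.

Lemma mcoeff13_fslide13 : (mcoeff (mnm2 1 3) (fslide (mnm2 1 3)) != 0)%R.
Proof. by apply/mcoeff_fslide_neq0; rewrite leqnn dominates_refl flat_mnm2. Qed.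

Lemma mcoeff22_fslide13 : mcoeff (mnm2 2 2) (fslide (mnm2 1 3)) = 0%R.
Proof.
by apply/eqP; apply: contraT => /mcoeff_fslide_neq0 /and3P [_ _]; rewrite !flat_mnm2.
Qed.

Lemma mcoeff02_particle02 : (mcoeff (mnm2 0 2) (particle (mnm2 0 2)) != 0)%R.
Proof.
by apply/mcoeff_particle_neq0; exists (self_bm (mnm2 0 2)); rewrite connect0 eqxx.
Qed.

Lemma mcoeff20_particle02 : mcoeff (mnm2 2 0) (particle (mnm2 0 2)) = 0%R.
Proof.
apply/eqP; apply: contraT => /mcoeff_particle_neq0 [c /andP [slide_c /eqP c20]].
by move: (fixed_slide_gt0 slide_c (i := ord_max) isT); rewrite c20.
Qed.

Lemma particle_support_02_11 b :
  (mcoeff (mnm2 0 2) (particle b) != 0 -> mcoeff (mnm2 1 1) (particle b) != 0)%R.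
Proof.
case/mcoeff_particle_neq0 => c /andP [/fixed_slide_dominates [dom deg] /eqP c02].
rewrite c02 dominates2 leqn0 in dom; case/andP: dom => /eqP b0 _.
rewrite c02 mdeg_mnm2 mdeg2 b0 !add0n in deg.
have -> : b = mnm2 0 2 by rewrite (mnm2_eta b) b0 -deg.
have deg11 : mdeg (mnm2 1 1) < (mdeg (mnm2 0 2)).+1 by rewrite !mdeg_mnm2.
apply/mcoeff_particle_neq0; exists (BMultinom deg11); rewrite eqxx andbT.
apply: connect1; apply/existsP; exists ord0; apply/existsP; exists ord_max.
by rewrite /= andbT; apply/forallP => t; case: (ord2P t) => ->.
Qed.

Lemma minn2_lt3 k : minn k 2 < 3.
Proof. exact: leq_ltn_trans (geq_minr _ _) _. Qed.

(* Entries are capped at 2 so that they fit in 'I_3; no witness below exceeds 2. *)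
Definition filling2 (a : 'X_{1..2}) (G : 'I_2 -> nat -> nat) : atom_filling 2 (mdeg a) :=
  [ffun rc : 'I_2 * 'I_(mdeg a) =>
     if rc.2 < a rc.1 then Ordinal (minn2_lt3 (G rc.1 rc.2)) else ord0].

Lemma filling2E a G r c :
  filling2 a G (r, c) = (if c < a r then minn (G r c) 2 else 0) :> nat.
Proof. by rewrite ffunE /=; case: ifP. Qed.

Lemma filling2_weight a G i : filling_weight (filling2 a G) i =
  \sum_(r < 2) \sum_(0 <= c < mdeg a) ((c < a r) && (minn (G r c) 2 == i.+1)).
Proof.
rewrite filling_weightE; apply: eq_bigr => r _; rewrite big_mkord.
by apply: eq_bigr => c _; rewrite filling2E; case: ifP.
Qed.

(* 'I_(mdeg a) does not compute (mdeg is a locked big sum), so the columns of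
   a concrete diagram are enumerated by hand. *)
Ltac case_column :=
  let j := fresh "j" in let lt_j := fresh "lt_j" in let lt_j' := fresh "lt_j" in
  case=> j lt_j; have lt_j' := lt_j; rewrite ?mdeg_mnm2 in lt_j';
  do 5 (try (destruct j as [|j]; last first)); try (exfalso; lia).

Ltac check_valid_filling2 :=
  rewrite /valid_filling; repeat (apply/andP; split);
  repeat (apply/forallP; case_column); by rewrite ?filling2E.

Ltac check_filling2_weight :=
  apply/mnmP => -[[|[|//]] ?];
  by rewrite filling2_weight big_ord2 mdeg_mnm2 unlock.

Lemma mcoeff02_atom02 : (mcoeff (mnm2 0 2) (atom (mnm2 0 2)) != 0)%R.
Proof.
apply/mcoeff_atom_neq0; exists (filling2 (mnm2 0 2) (fun _ _ => 2)).
by apply/andP; split; [check_valid_filling2 | apply/eqP; check_filling2_weight].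
Qed.

Lemma mcoeff20_atom02 : mcoeff (mnm2 2 0) (atom (mnm2 0 2)) = 0%R.
Proof.
apply/eqP; apply: contraT => /mcoeff_atom_neq0 [S /andP [S_valid /eqP wS]].
by move: (filling_weight_gt0 S_valid (r := ord_max) isT); rewrite wS.
Qed.

Lemma atom_support_02_11 b :
  (mcoeff (mnm2 0 2) (atom b) != 0 -> mcoeff (mnm2 1 1) (atom b) != 0)%R.
Proof.
case/atom_support_bounds; rewrite leqn0 mdeg_mnm2 mdeg2 => /eqP b0.
rewrite b0 !add0n => b1; rewrite (mnm2_eta b) b0 -b1.
apply/mcoeff_atom_neq0.
exists (filling2 (mnm2 0 2) (fun _ c => if c == 0 then 2 else 1)).
by apply/andP; split; [check_valid_filling2 | apply/eqP; check_filling2_weight].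
Qed.

Lemma atom_support_13_22 b :
  (mcoeff (mnm2 1 3) (atom b) != 0 -> mcoeff (mnm2 2 2) (atom b) != 0)%R.
Proof.
case/atom_support_bounds => b0_le1; rewrite mdeg_mnm2 mdeg2 => deg.
have [-> | ->] : b = mnm2 0 4 \/ b = mnm2 1 3.
  rewrite (mnm2_eta b); case: (b ord0) b0_le1 deg => [|[|//]] _ deg;
    [left | right]; congr mnm2; lia.
all: apply/mcoeff_atom_neq0.
- exists (filling2 (mnm2 0 4) (fun _ c => if c < 2 then 2 else 1)).
  by apply/andP; split; [check_valid_filling2 | apply/eqP; check_filling2_weight].
- exists (filling2 (mnm2 1 3)
    (fun r c => if r == 0 :> nat then 1 else if c < 2 then 2 else 1)).
  by apply/andP; split; [check_valid_filling2 | apply/eqP; check_filling2_weight].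
Qed.

Theorem proposition4p9 :
  [/\ not_pos_in atom mslide /\ not_pos_in mslide atom,
      not_pos_in atom fslide /\ not_pos_in fslide atom &
      not_pos_in particle mslide /\ not_pos_in mslide particle].
Proof.
split; split.
- exists 2, (mnm2 0 2); exact: not_pos_comb_support (@mslide_ge0 2)
    mslide_support_02_20 mcoeff02_atom02 mcoeff20_atom02.
- exists 2, (mnm2 0 2); exact: not_pos_comb_support (@atom_ge0 2)
    atom_support_02_11 mcoeff02_mslide02 mcoeff11_mslide02.
- exists 2, (mnm2 0 2); exact: not_pos_comb_support (@fslide_ge0 2)
    fslide_support_02_20 mcoeff02_atom02 mcoeff20_atom02.
- exists 2, (mnm2 1 3); exact: not_pos_comb_support (@atom_ge0 2)
    atom_support_13_22 mcoeff13_fslide13 mcoeff22_fslide13.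
- exists 2, (mnm2 0 2); exact: not_pos_comb_support (@mslide_ge0 2)
    mslide_support_02_20 mcoeff02_particle02 mcoeff20_particle02.
- exists 2, (mnm2 0 2); exact: not_pos_comb_support (@particle_ge0 2)
    particle_support_02_11 mcoeff02_mslide02 mcoeff11_mslide02.
Qed.
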